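(* Let $\mathcal F$ be a foam and $e$ a cyclic edge of $\mathcal F$ with both endpoints at the vertex $v$. Let $\mathcal N$ be a small regular neighbourhood of $v$ and let $\delta_+$ be an edge of the graph $\partial(\mathcal F\cap\mathcal N)$ such that exactly one endpoint of $\delta_+$ lies on $e$. Then the V-move at $v$ given by the 0-2 move along $\delta_+$ yields a foam $\mathcal F'$ with fewer cyclic edges than $\mathcal F$.
   Context: A foam in a compact connected three-manifold with boundary $M$ is the two-complex dual to an ideal triangulation of $M$. An edge loop is an edge with both ends at one vertex; a cyclic edge is an edge loop or a lift of one to a cover (here, in $\mathcal F$ itself, an edge loop). For a vertex $v$ with small regular neighbourhood $\mathcal N$, $\partial(\mathcal F\cap\mathcal N)$ is a complete graph on four vertices in the sphere $\partial\mathcal N$ whose edges are arcs in faces of $\mathcal F$. A 0-2 move along an arc $\delta$ properly embedded in a face and avoiding vertices pushes a thin neighbourhood of $\delta$ across the edges at its endpoints, creating two new vertices and a bigon face; the V-move at $v$ is the 0-2 move along one of these boundary arcs. *)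

(* combinatorial encoding of foams via their dual ideal
   triangulations (face-pairings of tetrahedra). *)
From HB Require Import structures.
From mathcomp Require Import all_boot all_fingroup.
Set Implicit Arguments.
Unset Strict Implicit.
Unset Printing Implicit Defensive.

(* An ideal triangulation with n tetrahedra (= foam with n vertices).
   A face of the triangulation is (t, f): the face of tetrahedron t opposite
   its vertex f.  [gl x] is the face glued to x, and [gm x] is the gluing map
   sending vertex labels of x.1 to vertex labels of (gl x).1.
   Foam vertices = tetrahedra, foam edges = unordered pairs {x, gl x}. *)
Record gluing (n : nat) := Gluing {
  gl : 'I_n * 'I_4 -> 'I_n * 'I_4 ;
  gm : 'I_n * 'I_4 -> {perm 'I_4} }.

Section Foam.
Variables (n : nat) (T : gluing n).

(* oriented edges of tetrahedra: (t, (u, w)) *)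
Definition edge_step : rel ('I_n * ('I_4 * 'I_4)) :=
  fun e e' => [exists i : 'I_4,
    [&& i != e.2.1, i != e.2.2 &
     e' == ((gl T (e.1, i)).1, (gm T (e.1, i) e.2.1, gm T (e.1, i) e.2.2))]].

Definition tet_adj : rel 'I_n :=
  fun s t => [exists i : 'I_4, (gl T (s, i)).1 == t].

(* [T] is the foam dual to an ideal triangulation of a compact connected
   3-manifold with boundary: every face is paired with a different face by
   a label bijection (an involutive pairing), no edge is identified with
   itself in reverse (so the truncated complex is a 3-manifold), and the
   complex is nonempty and connected. *)
Definition is_foam : Prop :=
  [/\ 0 < n,
      (forall x, gl T (gl T x) = x),
      (forall x, gl T x != x),
      (forall x, gm T x x.2 = snd (gl T x)) &
      (forall x, gm T (gl T x) = ((gm T x)^-1)%g)] /\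
  (forall t u w, u != w -> ~~ connect edge_step (t, (u, w)) (t, (w, u))) /\
  (forall s t, connect tet_adj s t).

Definition cyclic_edges : {set {set 'I_n * 'I_4}} :=
  [set [set x; gl T x] | x in [set x : 'I_n * 'I_4 | (gl T x).1 == x.1]].

End Foam.

(* The 0-2 move along the arc delta of the boundary graph
   d(F cap N(v)) = K4 joining the edge-ends (faces) i and j of vertex v.
   Dually: cut the triangulation along faces (v,i) and (v,j) (which share the
   edge of tetrahedron v complementary to {i,j}) and insert a pillow of two
   new tetrahedra P, Q (labelled like v) glued to each other by the identity
   along their faces other than i, j; P is glued to v, Q to the old partners. *)
Section VMove.
Variables (n : nat) (T : gluing n) (v : 'I_n) (i j : 'I_4).

Definition old_tet (t : 'I_n) : 'I_n.+2 := widen_ord (leqW (leqnSn n)) t.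
Definition tetP : 'I_n.+2 := inord n.
Definition tetQ : 'I_n.+2 := inord n.+1.
Definition old_face (x : 'I_n * 'I_4) : 'I_n.+2 * 'I_4 := (old_tet x.1, x.2).

Definition vmove_gl (x : 'I_n.+2 * 'I_4) : 'I_n.+2 * 'I_4 :=
  let: (t, f) := x in
  match insub (val t) : option 'I_n with
  | Some t' =>
      if (t', f) == (v, i) then (tetP, i) else
      if (t', f) == (v, j) then (tetP, j) else
      let y := gl T (t', f) in
      if y == (v, i) then (tetQ, i) else
      if y == (v, j) then (tetQ, j) else old_face y
  | None =>
      if val t == n then
        (if (f == i) || (f == j) then old_face (v, f) else (tetQ, f))
      else
        (if f == i then old_face (gl T (v, i)) else
         if f == j then old_face (gl T (v, j)) else (tetP, f))
  end.

Definition vmove_gm (x : 'I_n.+2 * 'I_4) : {perm 'I_4} :=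
  let: (t, f) := x in
  match insub (val t) : option 'I_n with
  | Some t' =>
      if ((t', f) == (v, i)) || ((t', f) == (v, j)) then 1%g
      else gm T (t', f)
  | None =>
      if val t == n then 1%g
      else (if f == i then gm T (v, i) else
            if f == j then gm T (v, j) else 1%g)
  end.

Definition vmove : gluing n.+2 := Gluing vmove_gl vmove_gm.

End VMove.

From mathcomp Require Import all_boot all_fingroup.
Set Implicit Arguments. Unset Strict Implicit. Unset Printing Implicit Defensive.

(* The face pairing of the result is checked face
   by face; this only needs the two arc faces not to be glued to each other,
   which holds because exactly one of them lies on the edge loop e.  Collapsing
   P and Q onto v maps edge paths of the new triangulation to edge paths of the
   old one, so no edge gets identified with its reverse, and P, Q are adjacent
   to v, so connectedness survives.  A face of P or Q is never glued back to
   the same tetrahedron, so every edge loop of the new foam comes from an edge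
   loop of the old one avoiding both arc faces; e meets them, so it is lost. *)

Lemma homo_connect (T1 T2 : finType) (e1 : rel T1) (e2 : rel T2) (f : T1 -> T2) :
    {homo f : x y / e1 x y >-> connect e2 x y} ->
  {homo f : x y / connect e1 x y >-> connect e2 x y}.
Proof.
move=> f_homo x y /connectP[p]; elim: p x => [|z p IHp] x /=; first by move=> _ ->.
by case/andP=> /f_homo exz /IHp zp /zp; apply: connect_trans.
Qed.

Lemma exists_third (i j : 'I_4) : exists f, f \notin [:: i; j].
Proof.
have /subsetPn[f _ fij] : ~~ ([set: 'I_4] \subset [set i; j]).
  by apply/negP=> /subset_leq_card; rewrite cardsT card_ord cards2; case: (i != j).
by exists f; rewrite !inE; rewrite !inE in fij.
Qed.

Lemma mem_cyclic_edges n (T : gluing n) x :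
  (gl T x).1 = x.1 -> [set x; gl T x] \in cyclic_edges T.
Proof. by move=> loop_x; apply/imsetP; exists x; rewrite // inE loop_x. Qed.

Section VMove.
Variables (n : nat) (T : gluing n) (v : 'I_n) (i j : 'I_4).
Local Notation G := (vmove_gl T v i j).
Local Notation M := (vmove_gm T v i j).

Definition arc_ends : {set 'I_n * 'I_4} := [set (v, i); (v, j)].

Lemma mem_arc_ends f : ((v, f) \in arc_ends) = (f \in [:: i; j]).
Proof. by rewrite !inE !xpair_eqE eqxx. Qed.

Lemma arc_endsE x : x \in arc_ends -> x = (v, x.2).
Proof. by case/set2P=> ->. Qed.

Lemma old_tet_inj : injective (@old_tet n).
Proof. by move=> s t [] /val_inj. Qed.

Lemma old_face_inj : injective (@old_face n).
Proof. by move=> [s f] [t g] [/val_inj -> ->]. Qed.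

Lemma val_tetP : val (tetP n) = n. Proof. exact: inordK. Qed.

Lemma val_tetQ : val (tetQ n) = n.+1. Proof. exact: inordK. Qed.

Lemma old_tet_neq_tetP t : (old_tet t == tetP n) = false.
Proof. by rewrite -val_eqE val_tetP; exact: ltn_eqF (ltn_ord t). Qed.

Lemma old_tet_neq_tetQ t : (old_tet t == tetQ n) = false.
Proof. by rewrite -val_eqE val_tetQ; exact: ltn_eqF (leqW (ltn_ord t)). Qed.

Lemma tetP_neq_tetQ : (tetP n == tetQ n) = false.
Proof. by rewrite -val_eqE val_tetP val_tetQ; exact: ltn_eqF (ltnSn n). Qed.

Variant tet_spec : 'I_n.+2 -> Type :=
  | TetOld t : tet_spec (old_tet t)
  | TetP : tet_spec (tetP n)
  | TetQ : tet_spec (tetQ n).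

Lemma split_tetP t : tet_spec t.
Proof.
case: (ltngtP t n) => [lt_tn|gt_tn|tn].
- have -> : t = old_tet (Ordinal lt_tn) by apply: val_inj.
  exact: TetOld.
- have -> : t = tetQ n.
    by apply/val_inj/eqP; rewrite val_tetQ eqn_leq gt_tn -ltnS ltn_ord.
  exact: TetQ.
- have -> : t = tetP n by apply: val_inj; rewrite val_tetP.
  exact: TetP.
Qed.

Lemma insub_old_tet (t : 'I_n) : insub (val (old_tet t)) = Some t.
Proof. exact: valK. Qed.

Lemma insub_tetP : insub (val (tetP n)) = None :> option 'I_n.
Proof. by rewrite val_tetP insubF // ltnn. Qed.

Lemma insub_tetQ : insub (val (tetQ n)) = None :> option 'I_n.
Proof. by rewrite val_tetQ insubF // ltnNge ltnW. Qed.

Lemma vmove_gl_old x : G (old_face x) =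
  if x \in arc_ends then (tetP n, x.2)
  else if gl T x \in arc_ends then (tetQ n, (gl T x).2)
  else old_face (gl T x).
Proof.
case: x => t f; rewrite /= insub_old_tet !inE.
by do 2![case: eqP => [[_ ->]|_] //=]; do 2![case: eqP => [->|_] //=].
Qed.

Lemma vmove_gm_old x : M (old_face x) = if x \in arc_ends then 1%g else gm T x.
Proof. by case: x => t f; rewrite /= insub_old_tet !inE. Qed.

Lemma vmove_gl_P f :
  G (tetP n, f) = if f \in [:: i; j] then old_face (v, f) else (tetQ n, f).
Proof. by rewrite /= insub_tetP val_tetP eqxx !inE. Qed.

Lemma vmove_gm_P f : M (tetP n, f) = 1%g.
Proof. by rewrite /= insub_tetP val_tetP eqxx. Qed.

Lemma vmove_gl_Q f : G (tetQ n, f) =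
  if f \in [:: i; j] then old_face (gl T (v, f)) else (tetP n, f).
Proof.
rewrite /= insub_tetQ val_tetQ eqn_leq ltnn !inE.
by case: eqP => [->|_] //; case: eqP => [->|].
Qed.

Lemma vmove_gm_Q f : M (tetQ n, f) = if f \in [:: i; j] then gm T (v, f) else 1%g.
Proof.
rewrite /= insub_tetQ val_tetQ eqn_leq ltnn !inE.
by case: eqP => [->|_] //; case: eqP => [->|].
Qed.

Lemma vmove_gl_arc f : f \in [:: i; j] -> G (old_face (v, f)) = (tetP n, f).
Proof. by rewrite vmove_gl_old mem_arc_ends => ->. Qed.

Lemma vmove_gm_arc f : f \in [:: i; j] -> M (old_face (v, f)) = 1%g.
Proof. by rewrite vmove_gm_old mem_arc_ends => ->. Qed.

Lemma vmove_gl_far x :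
  x \notin arc_ends -> gl T x \notin arc_ends -> G (old_face x) = old_face (gl T x).
Proof. by rewrite vmove_gl_old => /negbTE-> /negbTE->. Qed.

Lemma vmove_gm_far x : x \notin arc_ends -> M (old_face x) = gm T x.
Proof. by rewrite vmove_gm_old => /negbTE->. Qed.

Definition collapse_tet (t : 'I_n.+2) : 'I_n := odflt v (insub (val t)).

Definition collapse_edge (e : 'I_n.+2 * ('I_4 * 'I_4)) := (collapse_tet e.1, e.2).

Lemma collapse_old_tet t : collapse_tet (old_tet t) = t.
Proof. by rewrite /collapse_tet insub_old_tet. Qed.

Lemma collapse_tetP : collapse_tet (tetP n) = v.
Proof. by rewrite /collapse_tet insub_tetP. Qed.

Lemma collapse_tetQ : collapse_tet (tetQ n) = v.
Proof. by rewrite /collapse_tet insub_tetQ. Qed.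

Hypotheses (gl_invol : involutive (gl T)) (gl_fixfree : forall x, gl T x != x)
           (arc_unpaired : gl T (v, i) != (v, j)).

Lemma gl_arc_ends_notin x : x \in arc_ends -> gl T x \notin arc_ends.
Proof.
case/set2P=> ->; rewrite !inE negb_or gl_fixfree ?andbT //=.
by apply: contra arc_unpaired => /eqP <-; rewrite gl_invol.
Qed.

Lemma vmove_gl_partner f :
  f \in [:: i; j] -> G (old_face (gl T (v, f))) = (tetQ n, f).
Proof.
move=> fa; have vfa : (v, f) \in arc_ends by rewrite mem_arc_ends.
by rewrite vmove_gl_old (negbTE (gl_arc_ends_notin vfa)) gl_invol vfa.
Qed.

Variant vmove_face_spec :
    'I_n.+2 * 'I_4 -> 'I_n.+2 * 'I_4 -> {perm 'I_4} -> Type :=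
  | FaceArc f of f \in [:: i; j] :
      vmove_face_spec (old_face (v, f)) (tetP n, f) 1
  | FacePartner f of f \in [:: i; j] :
      vmove_face_spec (old_face (gl T (v, f))) (tetQ n, f) (gm T (gl T (v, f)))
  | FaceFar x of x \notin arc_ends & gl T x \notin arc_ends :
      vmove_face_spec (old_face x) (old_face (gl T x)) (gm T x)
  | FacePArc f of f \in [:: i; j] :
      vmove_face_spec (tetP n, f) (old_face (v, f)) 1
  | FacePQ f of f \notin [:: i; j] :
      vmove_face_spec (tetP n, f) (tetQ n, f) 1
  | FaceQPartner f of f \in [:: i; j] :
      vmove_face_spec (tetQ n, f) (old_face (gl T (v, f))) (gm T (v, f))
  | FaceQP f of f \notin [:: i; j] :
      vmove_face_spec (tetQ n, f) (tetP n, f) 1.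

Lemma vmove_faceP y : vmove_face_spec y (G y) (M y).
Proof.
case: y => t f; case: (split_tetP t) => [s||]; last first.
- rewrite vmove_gl_Q vmove_gm_Q; case: ifP => fa; first exact: FaceQPartner.
  by apply: FaceQP; rewrite fa.
- rewrite vmove_gl_P vmove_gm_P; case: ifP => fa; first exact: FacePArc.
  by apply: FacePQ; rewrite fa.
rewrite -[(old_tet s, f)]/(old_face (s, f)); move: (s, f) => x.
have [xa|xna] := boolP (x \in arc_ends).
  have fa : x.2 \in [:: i; j] by rewrite -mem_arc_ends -arc_endsE.
  by rewrite (arc_endsE xa) vmove_gl_arc // vmove_gm_arc //; apply: FaceArc.
have [gxa|gxna] := boolP (gl T x \in arc_ends); last first.
  by rewrite vmove_gl_far // vmove_gm_far //; apply: FaceFar.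
have fa : (gl T x).2 \in [:: i; j] by rewrite -mem_arc_ends -arc_endsE.
rewrite -[x]gl_invol (arc_endsE gxa) vmove_gl_partner //.
by rewrite vmove_gm_far ?gl_arc_ends_notin ?mem_arc_ends //; apply: FacePartner.
Qed.

Lemma vmove_gl_invol : involutive G.
Proof.
move=> y; case: (vmove_faceP y) => [f fa|f fa|x xa gxa|f fa|f fa|f fa|f fa].
- by rewrite vmove_gl_P fa.
- by rewrite vmove_gl_Q fa.
- by rewrite vmove_gl_far ?gl_invol.
- exact: vmove_gl_arc.
- by rewrite vmove_gl_Q (negbTE fa).
- exact: vmove_gl_partner.
- by rewrite vmove_gl_P (negbTE fa).
Qed.

Lemma vmove_gl_fixfree y : G y != y.
Proof.
have neq_tet t t' f f' : t != t' -> (t, f) != (t', f') by apply: contra => /eqP[->].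
case: (vmove_faceP y) => [f fa|f fa|x xa gxa|f fa|f fa|f fa|f fa].
3: by rewrite (inj_eq old_face_inj) gl_fixfree.
all: apply: neq_tet; rewrite ?[_ == old_tet _]eq_sym ?[tetQ n == _]eq_sym.
all: by rewrite ?old_tet_neq_tetP ?old_tet_neq_tetQ ?tetP_neq_tetQ.
Qed.

Lemma vmove_gm_label :
  (forall x, gm T x x.2 = (gl T x).2) -> forall y, M y y.2 = (G y).2.
Proof.
move=> gm_label y.
by case: (vmove_faceP y) => * /=; rewrite ?perm1 ?gm_label ?gl_invol.
Qed.

Lemma vmove_gm_inv :
  (forall x, gm T (gl T x) = (gm T x)^-1%g) -> forall y, M (G y) = (M y)^-1%g.
Proof.
move=> gm_inv y; case: (vmove_faceP y) => [f fa|f fa|x xa gxa|f fa|f fa|f fa|f fa].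
- by rewrite vmove_gm_P invg1.
- by rewrite vmove_gm_Q fa gm_inv invgK.
- by rewrite vmove_gm_far // gm_inv.
- by rewrite vmove_gm_arc // invg1.
- by rewrite vmove_gm_Q (negbTE fa) invg1.
- by rewrite vmove_gm_far ?gl_arc_ends_notin ?mem_arc_ends // gm_inv.
- by rewrite vmove_gm_P invg1.
Qed.

Lemma edge_step_face x u w : u != x.2 -> w != x.2 ->
  edge_step T (x.1, (u, w)) ((gl T x).1, (gm T x u, gm T x w)).
Proof.
move=> ux wx; apply/existsP; exists x.2.
by rewrite !(eq_sym x.2) ux wx -surjective_pairing /=.
Qed.

Lemma vmove_face_step y u w : u != y.2 -> w != y.2 ->
  connect (edge_step T) (collapse_tet y.1, (u, w))
                        (collapse_tet (G y).1, (M y u, M y w)).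
Proof.
case: (vmove_faceP y) => [f fa|f fa|x xa gxa|f fa|f fa|f fa|f fa] /= uy wy;
  rewrite ?collapse_old_tet ?collapse_tetP ?collapse_tetQ ?perm1 ?connect0 //;
  apply: connect1.
- by have := edge_step_face uy wy; rewrite gl_invol.
- exact: edge_step_face.
- exact: (@edge_step_face (v, f)).
Qed.

Lemma collapse_edge_step e e' : edge_step (vmove T v i j) e e' ->
  connect (edge_step T) (collapse_edge e) (collapse_edge e').
Proof.
case: e => t [u w] /existsP[k /and3P[ku kw /eqP->]].
by apply: (@vmove_face_step (t, k)); rewrite eq_sym.
Qed.

Local Notation adj := (tet_adj (vmove T v i j)).

Lemma connect_vmove_face y : connect adj y.1 (G y).1.
Proof.
by apply: connect1; apply/existsP; exists y.2; rewrite -surjective_pairing.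
Qed.

Lemma connect_old_v_tetP : connect adj (old_tet v) (tetP n).
Proof.
by have := connect_vmove_face (old_face (v, i)); rewrite vmove_gl_arc ?mem_head.
Qed.

Lemma connect_tetP_old_v : connect adj (tetP n) (old_tet v).
Proof. by have := connect_vmove_face (tetP n, i); rewrite vmove_gl_P mem_head. Qed.

Lemma connect_tetP_tetQ :
  connect adj (tetP n) (tetQ n) /\ connect adj (tetQ n) (tetP n).
Proof.
have [f fa] := exists_third i j; split.
  by have := connect_vmove_face (tetP n, f); rewrite vmove_gl_P (negbTE fa).
by have := connect_vmove_face (tetQ n, f); rewrite vmove_gl_Q (negbTE fa).
Qed.

Lemma connect_old_tet_gl x : connect adj (old_tet x.1) (old_tet (gl T x).1).
Proof.
have [PQ QP] := connect_tetP_tetQ.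
have [xa|xna] := boolP (x \in arc_ends).
  have fa : x.2 \in [:: i; j] by rewrite -mem_arc_ends -arc_endsE.
  rewrite (arc_endsE xa) /=; apply: connect_trans connect_old_v_tetP _.
  apply: connect_trans PQ _.
  by have := connect_vmove_face (tetQ n, x.2); rewrite vmove_gl_Q fa.
have := connect_vmove_face (old_face x).
have [gxa|gxna] := boolP (gl T x \in arc_ends); last by rewrite vmove_gl_far.
rewrite vmove_gl_old (negbTE xna) gxa (arc_endsE gxa) => /connect_trans; apply.
exact: connect_trans QP connect_tetP_old_v.
Qed.

Lemma connect_old_tet s t : tet_adj T s t -> connect adj (old_tet s) (old_tet t).
Proof. by case/existsP=> k /eqP <-; apply: (@connect_old_tet_gl (s, k)). Qed.

Lemma vmove_connected : (forall s t, connect (tet_adj T) s t) ->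
  forall s t, connect adj s t.
Proof.
move=> T_connected s t; have [PQ QP] := connect_tetP_tetQ.
have from_v r : connect adj (old_tet v) r.
  case: (split_tetP r) => [r'||].
  - by apply: (homo_connect connect_old_tet).
  - exact: connect_old_v_tetP.
  - exact: connect_trans connect_old_v_tetP PQ.
apply: connect_trans (from_v t).
case: (split_tetP s) => [s'||].
- by apply: (homo_connect connect_old_tet).
- exact: connect_tetP_old_v.
- exact: connect_trans QP connect_tetP_old_v.
Qed.

Lemma vmove_orientable :
    (forall t u w, u != w -> ~~ connect (edge_step T) (t, (u, w)) (t, (w, u))) ->
  forall t u w, u != w ->
    ~~ connect (edge_step (vmove T v i j)) (t, (u, w)) (t, (w, u)).
Proof.
move=> T_orientable t u w uw; apply: contra (T_orientable (collapse_tet t) u w uw).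
exact: (homo_connect collapse_edge_step).
Qed.

Lemma vmove_cyclic_edges_sub : cyclic_edges (vmove T v i j) \subset
  [set @old_face n @: S | S : {set 'I_n * 'I_4} in
     [set S in cyclic_edges T | [disjoint S & arc_ends]]].
Proof.
apply/subsetP=> S /imsetP[y loop_y ->]; move: loop_y; rewrite inE [gl _]/=.
case: (vmove_faceP y) => [f fa|f fa|x xa gxa|f fa|f fa|f fa|f fa] /=.
3: rewrite (inj_eq old_tet_inj) => /eqP loop_x.
3: apply/imsetP; exists [set x; gl T x]; last by rewrite imsetU1 imset_set1.
3: rewrite inE mem_cyclic_edges //= disjoints_subset.
3: by rewrite subUset !sub1set !in_setC xa.
all: rewrite ?[_ == old_tet _]eq_sym ?[tetQ n == _]eq_sym.
all: by rewrite ?old_tet_neq_tetP ?old_tet_neq_tetQ ?tetP_neq_tetQ.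
Qed.

Lemma vmove_cyclic_edges_lt E :
    E \in cyclic_edges T -> ~~ [disjoint E & arc_ends] ->
  #|cyclic_edges (vmove T v i j)| < #|cyclic_edges T|.
Proof.
move=> ET Ea; apply: leq_ltn_trans (subset_leq_card vmove_cyclic_edges_sub) _.
apply: leq_ltn_trans (leq_imset_card _ _) _; apply/proper_card/properP; split.
  by apply/subsetP=> S; rewrite inE => /andP[].
by exists E; rewrite // inE (negbTE Ea) andbF.
Qed.

End VMove.

Lemma vmove_is_foam n (T : gluing n) v i j :
  is_foam T -> gl T (v, i) != (v, j) -> is_foam (vmove T v i j).
Proof.
move=> [[_ gl_invol gl_fixfree gm_label gm_inv] [T_orientable T_connected]].
move=> unpaired.
split; [split|split] => //.
- exact: vmove_gl_invol.
- exact: vmove_gl_fixfree.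
- exact: vmove_gm_label.
- exact: vmove_gm_inv.
- exact: vmove_orientable.
- exact: vmove_connected.
Qed.

Lemma edge_loop_mem n (T : gluing n) v a b i j :
    involutive (gl T) -> gl T (v, a) = (v, b) -> gl T (v, i) = (v, j) ->
  i \in [:: a; b] -> j \in [:: a; b].
Proof.
move=> gl_invol loop_ab ij; rewrite !inE => /orP[]/eqP ei; subst i.
  by move: ij; rewrite loop_ab => -[->]; rewrite eqxx orbT.
by move: ij; rewrite -loop_ab gl_invol => -[->]; rewrite eqxx.
Qed.

Lemma edge_loop_arc_unpaired n (T : gluing n) v a b i j :
    involutive (gl T) -> gl T (v, a) = (v, b) ->
    (i \in [:: a; b]) (+) (j \in [:: a; b]) ->
  gl T (v, i) != (v, j).
Proof.
move=> gl_invol loop_ab ends; apply/eqP=> ij.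
have ji : gl T (v, j) = (v, i) by rewrite -ij gl_invol.
have same_ends : (i \in [:: a; b]) = (j \in [:: a; b]).
  apply/idP/idP; [exact: edge_loop_mem ij | exact: edge_loop_mem ji].
by rewrite same_ends addbb in ends.
Qed.

Lemma edge_loop_meets_arc n (v : 'I_n) a b i j :
    (i \in [:: a; b]) || (j \in [:: a; b]) ->
  ~~ [disjoint [set (v, a); (v, b)] & arc_ends v i j].
Proof.
have mem_loop c : ((v, c) \in [set (v, a); (v, b)]) = (c \in [:: a; b]).
  by rewrite !inE !xpair_eqE eqxx.
rewrite -setI_eq0 => ends; apply/set0Pn.
by case/orP: ends => cab; [exists (v, i) | exists (v, j)];
  rewrite inE mem_loop mem_arc_ends cab !inE eqxx ?orbT.
Qed.

Theorem mainTheorem6 (n : nat) (T : gluing n) (v : 'I_n) (a b i j : 'I_4) :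
  is_foam T ->
  gl T (v, a) = (v, b) ->
  i != j ->
  (i \in [:: a; b]) (+) (j \in [:: a; b]) ->
  is_foam (vmove T v i j) /\
  #|cyclic_edges (vmove T v i j)| < #|cyclic_edges T|.
Proof.
move=> T_foam loop_ab _ ends.
have [[_ gl_invol gl_fixfree _ _] _] := T_foam.
have unpaired := edge_loop_arc_unpaired gl_invol loop_ab ends.
split; first exact: vmove_is_foam.
apply: (vmove_cyclic_edges_lt gl_invol gl_fixfree unpaired
          (E := [set (v, a); (v, b)])).
  by rewrite -loop_ab mem_cyclic_edges ?loop_ab.
by apply: edge_loop_meets_arc; move: ends; case: (i \in _); case: (j \in _).
Qed.
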